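(* For any positive integer $k$, in $\mathfrak{h}^1_t[[u]]$, $$S_t\left(\frac{1}{1-z_ku}\right)\ast S_{1-t}\left(\frac{1}{1+z_ku}\right)=1$$ and $$S_{1-2t}\left(\frac{1}{1-z_ku}\right)\ast_t\frac{1}{1+z_ku}=1.$$
   Context: $t,u$ are commuting variables. $\mathfrak{h}_t=\mathbb{Q}[t]\langle x,y\rangle$ ($1$ = empty word), $\mathfrak{h}^1_t=\mathbb{Q}[t]+\mathfrak{h}_ty$, $z_k=x^{k-1}y$, and $\frac1{1\mp z_ku}=\sum_n(\pm1)^nz_k^nu^n$ (concatenation powers). For a parameter $s\in\mathbb{Q}[t]$, $\sigma_s$ is the algebra automorphism of $\mathfrak{h}_t$ with $\sigma_s(x)=x,\sigma_s(y)=sx+y$ and $S_s$ is the $\mathbb{Q}[t]$-linear map with $S_s(1)=1$, $S_s(wa)=\sigma_s(w)a$ for words $w$, letters $a$. For a word $w$, $\delta(w)=1$ if $w=1$, else $0$. The harmonic product $\ast$ on $\mathfrak{h}^1_t$ is the $\mathbb{Q}[t]$-bilinear product with $1\ast w=w\ast1=w$ and $z_kw_1\ast z_lw_2=z_k(w_1\ast z_lw_2)+z_l(z_kw_1\ast w_2)+z_{k+l}(w_1\ast w_2)$; the $t$-harmonic product $\ast_t$ is the $\mathbb{Q}[t]$-bilinear product with $1\ast_t w=w\ast_t1=w$ and $z_kw_1\ast_t z_lw_2=z_k(w_1\ast_t z_lw_2)+z_l(z_kw_1\ast_t w_2)+(1-2t)z_{k+l}(w_1\ast_t w_2)+[1-\delta(w_1)\delta(w_2)](t^2-t)x^{k+l}(w_1\ast_t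 w_2)$ (for words $w_1,w_2\in\mathfrak{h}^1_t$, $k,l\ge1$). Everything extends coefficientwise to power series in $u$. *)

From mathcomp Require Import all_boot all_order all_algebra.
Set Implicit Arguments. Unset Strict Implicit. Unset Printing Implicit Defensive.
Import GRing.Theory.
Local Open Scope ring_scope.

(* Coefficient ring Q[t]: polynomials over rat, t = 'X. *)
Notation Qt := {poly rat}.

Definition word := seq bool.
Notation lx := false.
Notation ly := true.

(* An element of h_t = Q[t]<x,y> is given as a finite formal Q[t]-linear
   combination of words; two such are equal in h_t iff all their word
   coefficients agree (see [coef]). *)
Definition ht := seq (Qt * word).

Definition coef (p : ht) (w : word) : Qt :=
  \sum_(c <- p) (if c.2 == w then c.1 else 0).

Definition hone : ht := [:: (1, [::])].
Definition hword (w : word) : ht := [:: (1, w)].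
Definition hscale (c : Qt) (p : ht) : ht := [seq (c * a.1, a.2) | a <- p].
Definition hadd (p q : ht) : ht := p ++ q.

Definition hmul (p q : ht) : ht :=
  [seq (a.1 * b.1, a.2 ++ b.2) | a <- p, b <- q].

Definition zk (k : nat) : word := rcons (nseq k.-1 lx) ly.
Definition wpow (w : word) (n : nat) : word := flatten (nseq n w).

(* sigma_s : algebra automorphism with x |-> x, y |-> s x + y *)
Fixpoint sigma_word (s : Qt) (w : word) : ht :=
  match w with
  | [::] => hone
  | a :: w' =>
      hmul (if a then [:: (s, [:: lx]); (1, [:: ly])] else [:: (1, [:: lx])])
           (sigma_word s w')
  end.

(* S_s(1) = 1, S_s(w a) = sigma_s(w) a *)
Definition S_word (s : Qt) (w : word) : ht :=
  match rev w with
  | [::] => hone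
  | a :: r => hmul (sigma_word s (rev r)) (hword [:: a])
  end.

Definition S_map (s : Qt) (p : ht) : ht :=
  flatten [seq hscale a.1 (S_word s a.2) | a <- p].

(* decomposition of a word of h^1 (ending in y, or empty) as z_{k1} ... z_{kr} *)
Fixpoint zdec_aux (c : nat) (w : word) : seq nat :=
  match w with
  | [::] => [::]
  | a :: w' => if a then c.+1 :: zdec_aux 0 w' else zdec_aux c.+1 w'
  end.
Definition zdec (w : word) : seq nat := zdec_aux 0 w.
Definition zword (ks : seq nat) : word := flatten [seq zk k | k <- ks].

(* Generic quasi-shuffle on index lists:
   z_k w1 * z_l w2 = z_k (w1 * z_l w2) + z_l (z_k w1 * w2)
                     + c z_{k+l} (w1 * w2)
                     + [1 - delta(w1) delta(w2)] d x^{k+l} (w1 * w2). *)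
Fixpoint qsh (c d : Qt) (a : seq nat) : seq nat -> ht :=
  match a with
  | [::] => fun b => hword (zword b)
  | k :: a' =>
      fix qsh_b (b : seq nat) : ht :=
        match b with
        | [::] => hword (zword a)
        | l :: b' =>
            hadd (hmul (hword (zk k)) (qsh c d a' b))
           (hadd (hmul (hword (zk l)) (qsh_b b'))
           (hadd (hscale c (hmul (hword (zk (k + l))) (qsh c d a' b')))
                 (hscale (if (a' == [::]) && (b' == [::]) then 0 else d)
                         (hmul (hword (nseq (k + l) lx)) (qsh c d a' b')))))
        end
  end.

Definition qprod (c d : Qt) (p q : ht) : ht :=
  flatten [seq hscale (a.1 * b.1) (qsh c d (zdec a.2) (zdec b.2)) | a <- p, b <- q].

Definition harm (p q : ht) : ht := qprod 1 0 p q.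
Definition tharm (p q : ht) : ht := qprod (1 - 2%:R * 'X) ('X ^+ 2 - 'X) p q.

(* power series in u with coefficients in h_t: n |-> coefficient of u^n *)
Definition hts := nat -> ht.

(* 1/(1 - sgn z u) written with sgn = +1 or -1: coefficient sgn^n z^n *)
Definition geom (sgn : Qt) (w : word) : hts := fun n => [:: (sgn ^+ n, wpow w n)].
Definition S_ser (s : Qt) (A : hts) : hts := fun n => S_map s (A n).
Definition ser_prod (op : ht -> ht -> ht) (A B : hts) : hts :=
  fun n => flatten [seq op (A i) (B (n - i)%N) | i <- iota 0 n.+1].
Definition ser_one : hts := fun n => if n == 0%N then hone else [::].

Definition ser_eq (A B : hts) : Prop := forall n w, coef (A n) w = coef (B n) w.

(* Identify a word z_{k_1} ... z_{k_r} of h^1 with its index sequence (k_1, ..., k_r).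
   Since sigma_s(z_k) = s x^k + z_k, the element S_s(z_k^i) is the sum of the words
   z_{m_1 k} ... z_{m_r k} with m_1 + ... + m_r = i, weighted by s^(i - r); hence
   S_s(1/(1 - e z_k u)) is the "geometric family" 1/(1 - sum_m al(m) z_{mk} u^m) with
   al(m) = e^m s^(m-1), and 1/(1 + z_k u) is the case s = 0.  For a quasi-shuffle
   product with contraction coefficient c, expanding A * B at a word z_e w along the
   recursive definition shows, by induction on the degree in u, that A * B = 1 as soon
   as al(m) + be(m) + c sum_{a+b=m} al(a) be(b) = 0 for all m >= 1: the extra terms
   x^{a+b}(...) of the t-harmonic product only produce coefficients of products of
   lower degree at nonempty words.  For al(m) = x^(m-1), be(m) = -y^(m-1), c = x - y
   this condition is x^n - y^n = (x - y) sum_a x^(a-1) y^(n-a), and the two products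
   are the cases (x, y) = (t, t - 1) and (x, y) = (1 - 2t, 0). *)

From mathcomp Require Import all_boot all_order all_algebra.
From mathcomp Require Import zify ring.
Set Implicit Arguments. Unset Strict Implicit. Unset Printing Implicit Defensive.
Import GRing.Theory.
Local Open Scope ring_scope.

Ltac simp := rewrite /= ?(mulr0n, mulr1n, mul0r, mulr0, mul1r, mulr1, add0r, addr0).

Lemma coef_nil w : coef [::] w = 0.
Proof. by rewrite /coef big_nil. Qed.

Lemma coef_cons a p w : coef (a :: p) w = (if a.2 == w then a.1 else 0) + coef p w.
Proof. by rewrite /coef big_cons. Qed.

Lemma coef_cat p q w : coef (p ++ q) w = coef p w + coef q w.
Proof. by rewrite /coef big_cat. Qed.

Lemma coef_hadd p q w : coef (hadd p q) w = coef p w + coef q w.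
Proof. exact: coef_cat. Qed.

Lemma coef_hscale c p w : coef (hscale c p) w = c * coef p w.
Proof.
rewrite /coef /hscale big_map mulr_sumr; apply: eq_bigr => a _ /=.
by case: eqP; rewrite ?mulr0.
Qed.

Lemma coef_hword u w : coef (hword u) w = (u == w)%:R.
Proof. by rewrite /hword coef_cons coef_nil addr0; case: eqP. Qed.

Lemma coef_flatten (L : seq ht) w : coef (flatten L) w = \sum_(l <- L) coef l w.
Proof.
elim: L => [|l L IH]; first by rewrite big_nil coef_nil.
by rewrite /= coef_cat IH big_cons.
Qed.

Lemma cat_eq_nil (u v : word) : (u ++ v == [::]) = (u == [::]) && (v == [::]).
Proof. by case: u. Qed.

Lemma cat_eq_split (u v w : word) :
  (u ++ v == w) = (take (size u) w == u) && (v == drop (size u) w).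
Proof.
apply/eqP/andP => [<-|[/eqP Ht /eqP ->]].
  by rewrite take_size_cat // drop_size_cat.
by rewrite -{2}(cat_take_drop (size u) w) Ht.
Qed.

Lemma coef_hmul_hword u p w : coef (hmul (hword u) p) w =
  if take (size u) w == u then coef p (drop (size u) w) else 0.
Proof.
rewrite /hmul /hword /= cats0 /coef big_map; case: ifP => Ht.
  by apply: eq_bigr => b _; rewrite cat_eq_split Ht mul1r.
by apply: big1 => b _; rewrite cat_eq_split Ht.
Qed.

Definition posseq (s : seq nat) := all (leq 1) s.

Lemma zk_cat a v : zk a ++ v = nseq a.-1 lx ++ ly :: v.
Proof. by rewrite /zk cat_rcons. Qed.

Lemma zk_eq_nil a : (zk a == [::]) = false.
Proof. by rewrite -size_eq0 size_rcons. Qed.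

Lemma last_zk a : last ly (zk a).
Proof. exact: last_rcons. Qed.

Lemma nseqS_cat (m : nat) (w : word) : nseq m.+1 lx ++ w = nseq m lx ++ lx :: w.
Proof. by elim: m => //= m ->. Qed.

Lemma eq_xs_y_cat i j u v :
  (nseq i lx ++ ly :: u == nseq j lx ++ ly :: v) = (i == j)%N && (u == v).
Proof. by elim: i j => [|i IH] [|j] //=; rewrite eqseq_cons IH. Qed.

Lemma eq_zk_cat a e u v : (0 < a)%N -> (0 < e)%N ->
  (zk a ++ u == zk e ++ v) = (a == e) && (u == v).
Proof. by case: a e => [|a] [|e] // _ _; rewrite !zk_cat eq_xs_y_cat. Qed.

Lemma eq_xs_zk_cat m e u v : (0 < e)%N ->
  (nseq m lx ++ u == zk e ++ v) = (m < e)%N && (u == zk (e - m) ++ v).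
Proof.
case: e => // e _; rewrite !zk_cat /= ltnS.
elim: m e => [|m IH] [|e] //=.
by rewrite eqseq_cons IH subSS.
Qed.

Lemma coef_hmul_zk a e p v : (0 < a)%N -> (0 < e)%N ->
  coef (hmul (hword (zk a)) p) (zk e ++ v) = if a == e then coef p v else 0.
Proof.
move=> a0 e0; rewrite /hmul /hword /= cats0 /coef big_map.
case: ifP => Hae; last by apply: big1 => b _; rewrite eq_zk_cat // Hae.
by apply: eq_bigr => b _; rewrite eq_zk_cat // Hae mul1r.
Qed.

Lemma coef_hmul_xs m e p v : (0 < e)%N ->
  coef (hmul (hword (nseq m lx)) p) (zk e ++ v) =
  if (m < e)%N then coef p (zk (e - m) ++ v) else 0.
Proof.
move=> e0; rewrite /hmul /hword /= cats0 /coef big_map.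
case: ifP => Hme; last by apply: big1 => b _; rewrite eq_xs_zk_cat // Hme.
by apply: eq_bigr => b _; rewrite eq_xs_zk_cat // Hme mul1r.
Qed.

Lemma zword_cons a ks : zword (a :: ks) = zk a ++ zword ks.
Proof. by []. Qed.

Lemma zword_eq_nil ks : (zword ks == [::]) = (ks == [::]).
Proof. by case: ks => [|a ks] //; rewrite zword_cons cat_eq_nil zk_eq_nil. Qed.

Lemma last_zword ks : last ly (zword ks).
Proof. by elim: ks => [|a ks IH] //; rewrite zword_cons last_cat last_zk. Qed.

Lemma zword_inj A B : posseq A -> posseq B -> (zword A == zword B) = (A == B).
Proof.
elim: A B => [|a A IH] [|b B] //.
- by move=> _ _; rewrite zword_cons eq_sym cat_eq_nil zk_eq_nil.
- by move=> _ _; rewrite zword_cons cat_eq_nil zk_eq_nil.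
move=> /andP[a0 pA] /andP[b0 pB].
by rewrite !zword_cons eq_zk_cat // eqseq_cons IH.
Qed.

Lemma zdec_aux_cat c m v : zdec_aux c (nseq m lx ++ ly :: v) = (c + m).+1 :: zdec v.
Proof. by elim: m c => [|m IH] c /=; rewrite ?addn0 // IH addSnnS. Qed.

Lemma zdec_zk a v : (0 < a)%N -> zdec (zk a ++ v) = a :: zdec v.
Proof. by move=> a0; rewrite zk_cat /zdec zdec_aux_cat add0n prednK. Qed.

Lemma zdec_zword ks : posseq ks -> zdec (zword ks) = ks.
Proof. by elim: ks => [|a ks IH] //= /andP[a0 pk]; rewrite zdec_zk // IH. Qed.

Lemma zdec_pos w : posseq (zdec w).
Proof.
rewrite /zdec; elim: w 0%N => [|a w IH] c //=.
by case: a => /=; rewrite IH.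
Qed.

Lemma zdec_aux_shift c w :
  zdec_aux c w = if zdec w is e :: r then (c + e)%N :: r else [::].
Proof.
suff H c' : zdec_aux (c + c') w =
    if zdec_aux c' w is e :: r then (c + e)%N :: r else [::].
  by rewrite -[c]addn0 H addn0.
elim: w c' => [|a w IH] c' //=; case: a => /=; first by rewrite addnS.
by rewrite -addnS IH.
Qed.

Lemma zdec_xs m w : zdec (nseq m lx ++ w) = zdec_aux m w.
Proof.
suff H c : zdec_aux c (nseq m lx ++ w) = zdec_aux (c + m) w by rewrite /zdec H.
by elim: m c => [|m IH] c /=; rewrite ?addn0 // IH addSnnS.
Qed.

Lemma zword_zdec w : last ly w -> zword (zdec w) = w.
Proof.
suff H c : w != [::] -> last ly w -> zword (zdec_aux c w) = nseq c lx ++ w.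
  by case: w H => [|a w] // H Hl; rewrite /zdec H.
elim: w c => [|a w IH] c // _; case: a => /= Hl.
  by rewrite zword_cons zk_cat /=; case: w IH Hl => [|b w] IH Hl //; rewrite IH.
by case: w IH Hl => [|b w] IH Hl //=; rewrite IH // nseqS_cat.
Qed.

Lemma zdec_zk1 k : (0 < k)%N -> zdec (zk k) = [:: k].
Proof. by move=> k0; rewrite -[zk k]cats0 zdec_zk. Qed.

(** * The quasi-shuffle product on index sequences *)

Lemma qsh_nil_l c d B : qsh c d [::] B = hword (zword B).
Proof. by []. Qed.

Lemma qsh_nil_r c d A : qsh c d A [::] = hword (zword A).
Proof. by case: A. Qed.

Lemma qsh_cons c d a A b B : qsh c d (a :: A) (b :: B) =
  hadd (hmul (hword (zk a)) (qsh c d A (b :: B)))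
 (hadd (hmul (hword (zk b)) (qsh c d (a :: A) B))
 (hadd (hscale c (hmul (hword (zk (a + b))) (qsh c d A B)))
       (hscale (if (A == [::]) && (B == [::]) then 0 else d)
               (hmul (hword (nseq (a + b) lx)) (qsh c d A B))))).
Proof. by []. Qed.

Lemma coef_qsh_cons c d a A b B w : coef (qsh c d (a :: A) (b :: B)) w =
  coef (hmul (hword (zk a)) (qsh c d A (b :: B))) w
  + coef (hmul (hword (zk b)) (qsh c d (a :: A) B)) w
  + c * coef (hmul (hword (zk (a + b))) (qsh c d A B)) w
  + (if (A == [::]) && (B == [::]) then 0 else d) *
      coef (hmul (hword (nseq (a + b) lx)) (qsh c d A B)) w.
Proof.
rewrite qsh_cons (coef_hadd (hmul (hword (zk a)) _)).
by rewrite (coef_hadd (hmul (hword (zk b)) _)) coef_hadd !coef_hscale !addrA.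
Qed.

Lemma coef_qsh_nil c d A B : posseq A -> posseq B ->
  coef (qsh c d A B) [::] = ((A == [::]) && (B == [::]))%:R.
Proof.
case: A => [|a A]; first by rewrite qsh_nil_l coef_hword zword_eq_nil.
case: B => [|b B]; first by rewrite qsh_nil_r coef_hword zword_eq_nil andbT.
move=> /andP[a0 _] /andP[b0 _].
rewrite coef_qsh_cons !coef_hmul_hword /= !(eq_sym [::]) !zk_eq_nil.
by rewrite -size_eq0 size_nseq addn_eq0 (gtn_eqF a0); simp.
Qed.

Definition in_h1 (p : ht) := forall v, ~~ last ly v -> coef p v = 0.

Lemma in_h1_hmul u p : in_h1 p -> last ly u || (coef p [::] == 0) ->
  in_h1 (hmul (hword u) p).
Proof.
move=> hp hu v hv; rewrite coef_hmul_hword; case: ifP => // /eqP Ht.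
move: hv; rewrite -{1}(cat_take_drop (size u) v) Ht last_cat.
case E: (drop (size u) v) => [|a r] /=; last by move=> h; apply: hp.
by case/orP: hu => [-> //|/eqP].
Qed.

Lemma in_h1_zword ks : in_h1 (hword (zword ks)).
Proof.
by move=> v hv; rewrite coef_hword; case: eqP => // E; move: hv; rewrite -E last_zword.
Qed.

Lemma qsh_in_h1 c d A B : posseq A -> posseq B -> in_h1 (qsh c d A B).
Proof.
elim: A B => [|a A IHA] B pA pB.
  by rewrite qsh_nil_l; apply: in_h1_zword.
elim: B pB => [|b B IHB] pB.
  by rewrite qsh_nil_r; apply: in_h1_zword.
case/andP: (pA) => a0 pA'; case/andP: (pB) => b0 pB'.
have hAB := IHA _ pA' pB'.
move=> v hv; rewrite coef_qsh_cons.
rewrite (in_h1_hmul (IHA _ pA' pB) _ hv) ?last_zk //.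
rewrite (in_h1_hmul (IHB pB') _ hv) ?last_zk //.
rewrite (in_h1_hmul hAB _ hv) ?last_zk //.
case: ifP => [_|/negbT hAB0]; first by simp.
rewrite (in_h1_hmul hAB _ hv); first by simp.
by rewrite coef_qsh_nil // (negbTE hAB0) eqxx orbT.
Qed.

Lemma coef_qsh_zk c d A B e ks : posseq A -> posseq B -> posseq ks -> (0 < e)%N ->
  coef (qsh c d A B) (zk e ++ zword ks) =
    (if A is a :: A' then (if a == e then coef (qsh c d A' B) (zword ks) else 0) else 0)
  + (if B is b :: B' then (if b == e then coef (qsh c d A B') (zword ks) else 0) else 0)
  + (if A is a :: A' then if B is b :: B' then
        (if (a + b == e)%N then c * coef (qsh c d A' B') (zword ks) else 0)
      + (if (a + b < e)%N then
           d * coef (qsh c d A' B') (zk (e - (a + b)) ++ zword ks) else 0)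
     else 0 else 0).
Proof.
move=> pA pB pk e0.
have pek : posseq (e :: ks) by rewrite /= e0.
case: A pA => [|a A] pA.
  rewrite qsh_nil_l coef_hword -zword_cons zword_inj //.
  case: B pB => [|b B] pB; first by simp.
  case/andP: pB => _ pB; rewrite eqseq_cons qsh_nil_l coef_hword zword_inj //.
  by case: (b == e); simp.
case: B pB => [|b B] pB.
  rewrite qsh_nil_r coef_hword -zword_cons zword_inj // eqseq_cons.
  case/andP: pA => _ pA; rewrite qsh_nil_r coef_hword zword_inj //.
  by case: (a == e); simp.
case/andP: (pA) => a0 _; case/andP: (pB) => b0 _.
rewrite coef_qsh_cons !coef_hmul_zk ?addn_gt0 ?a0 // coef_hmul_xs // -!addrA.
congr (_ + (_ + _)); congr (_ + _); first by case: ifP; rewrite ?mulr0.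
case: ifP => [/andP[/eqP -> /eqP ->]|_]; last by case: ifP; rewrite ?mulr0.
case: ifP; rewrite ?mulr0 // qsh_nil_l coef_hword /= eq_sym cat_eq_nil zk_eq_nil.
by simp.
Qed.

(* [zdec] ignores a trailing block of x's, so [zcoef] reads coefficients faithfully
   only on elements of h^1. *)
Definition zcoef (p : ht) (ks : seq nat) : Qt :=
  \sum_(x <- p) (if zdec x.2 == ks then x.1 else 0).

Definition bilin (p q : ht) (F : seq nat -> seq nat -> Qt) : Qt :=
  \sum_(x <- p) x.1 * \sum_(y <- q) y.1 * F (zdec x.2) (zdec y.2).

Lemma coef_qprod c d p q w :
  coef (qprod c d p q) w = bilin p q (fun X Y => coef (qsh c d X Y) w).
Proof.
rewrite /qprod coef_flatten big_allpairs_dep /bilin.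
apply: eq_bigr => x _; rewrite mulr_sumr; apply: eq_bigr => y _.
by rewrite coef_hscale mulrA.
Qed.

Lemma eq_bilin p q F G : (forall X Y, posseq X -> posseq Y -> F X Y = G X Y) ->
  bilin p q F = bilin p q G.
Proof.
move=> eqFG; apply: eq_bigr => x _; congr (_ * _); apply: eq_bigr => y _.
by rewrite eqFG ?zdec_pos.
Qed.

Lemma bilinD p q F G : bilin p q (fun X Y => F X Y + G X Y) = bilin p q F + bilin p q G.
Proof.
rewrite /bilin -big_split; apply: eq_bigr => x _ /=.
by rewrite -mulrDr -big_split; congr (_ * _); apply: eq_bigr => y _; rewrite mulrDr.
Qed.

Lemma bilin_if p q (b : bool) (l : Qt) F :
  bilin p q (fun X Y => if b then l * F X Y else 0) = if b then l * bilin p q F else 0.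
Proof.
case: b; last by rewrite /bilin big1 // => x _; rewrite big1 ?mulr0 // => y _; rewrite mulr0.
rewrite /bilin mulr_sumr; apply: eq_bigr => x _.
rewrite mulrCA; congr (_ * _); rewrite mulr_sumr; apply: eq_bigr => y _.
by rewrite mulrCA.
Qed.

Lemma bilinC p q F :
  bilin p q F = bilin q p (fun Y X => F X Y).
Proof.
rewrite /bilin; under eq_bigr => x _ do rewrite mulr_sumr.
rewrite exchange_big /=; apply: eq_bigr => y _.
rewrite mulr_sumr; apply: eq_bigr => x _.
by rewrite mulrCA.
Qed.

Lemma sum_zcoef p (L : seq (seq nat)) (H : seq nat -> Qt) : uniq L ->
  {subset [seq zdec x.2 | x <- p] <= L} ->
  \sum_(x <- p) x.1 * H (zdec x.2) = \sum_(ks <- L) zcoef p ks * H ks.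
Proof.
elim: p => [|x p IH] uL Hsub.
  by rewrite big_nil big1 // => ks _; rewrite /zcoef big_nil mul0r.
rewrite big_cons IH //; last by move=> z Hz; apply: Hsub; rewrite inE Hz orbT.
under [RHS]eq_bigr => ks _ do rewrite /zcoef big_cons mulrDl.
rewrite big_split /=; congr (_ + _).
have xL : zdec x.2 \in L by apply: Hsub; rewrite inE eqxx.
rewrite (bigD1_seq (zdec x.2)) //= eqxx big1 ?addr0 // => ks.
by rewrite eq_sym => /negbTE ->; rewrite mul0r.
Qed.

Lemma bilin_zcoef_l p p' (l : Qt) q F : (forall ks, zcoef p ks = l * zcoef p' ks) ->
  bilin p q F = l * bilin p' q F.
Proof.
move=> Hp; set L := undup [seq zdec x.2 | x <- p ++ p'].
have uL : uniq L by apply: undup_uniq.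
rewrite /bilin !(@sum_zcoef _ L (fun X => \sum_(y <- q) y.1 * F X (zdec y.2))) //.
- by rewrite mulr_sumr; apply: eq_bigr => ks _; rewrite Hp mulrA.
- by move=> z Hz; rewrite mem_undup map_cat mem_cat Hz orbT.
- by move=> z Hz; rewrite mem_undup map_cat mem_cat Hz.
Qed.

Lemma bilin_zcoef_r p q q' (l : Qt) F : (forall ks, zcoef q ks = l * zcoef q' ks) ->
  bilin p q F = l * bilin p q' F.
Proof. by move=> Hq; rewrite bilinC (bilin_zcoef_l _ _ Hq) -bilinC. Qed.

Definition zquot (a : nat) (p : ht) : ht :=
  [seq (x.1, zword (behead (zdec x.2))) | x <- p & head 0%N (zdec x.2) == a].

Lemma zdec_zword_behead w : zdec (zword (behead (zdec w))) = behead (zdec w).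
Proof. by rewrite zdec_zword //; case: (zdec w) (zdec_pos w) => //= ? ? /andP[]. Qed.

Lemma sum_zquot a p (H : seq nat -> Qt) : (0 < a)%N ->
  \sum_(x <- zquot a p) x.1 * H (zdec x.2) =
  \sum_(x <- p) x.1 * (if zdec x.2 is b :: r then (if b == a then H r else 0) else 0).
Proof.
move=> a0; rewrite /zquot big_map big_filter big_mkcond /=.
apply: eq_bigr => x _; rewrite zdec_zword_behead.
case: (zdec x.2) => [|b r] /=; first by rewrite (ltn_eqF a0) mulr0.
by case: (b == a); rewrite ?mulr0.
Qed.

Lemma zcoef_zquot a p ks : (0 < a)%N -> zcoef (zquot a p) ks = zcoef p (a :: ks).
Proof.
move=> a0; rewrite /zcoef /zquot big_map big_filter big_mkcond /=.
apply: eq_bigr => x _; rewrite zdec_zword_behead.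
case: (zdec x.2) => [|b r] /=; first by rewrite (ltn_eqF a0).
by rewrite eqseq_cons; case: (b == a).
Qed.

Lemma bilin_zquot_l e p q G : (0 < e)%N ->
  bilin p q (fun X Y => if X is a :: X' then (if a == e then G X' Y else 0) else 0)
  = bilin (zquot e p) q G.
Proof.
move=> e0; rewrite /bilin (sum_zquot _ (fun X => \sum_(y <- q) y.1 * G X (zdec y.2))) //.
apply: eq_bigr => x _; congr (_ * _).
case: (zdec x.2) => [|b r]; first by rewrite big1 // => y _; rewrite mulr0.
by case: (b == e) => //; rewrite big1 // => y _; rewrite mulr0.
Qed.

Lemma bilin_zquot_r e p q G : (0 < e)%N ->
  bilin p q (fun X Y => if Y is b :: Y' then (if b == e then G X Y' else 0) else 0)
  = bilin p (zquot e q) G.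
Proof. by move=> e0; rewrite bilinC bilin_zquot_l // -bilinC. Qed.

Lemma sum_nat_pred1 m n (j : nat) (F : nat -> Qt) :
  \sum_(m <= i < n) (if j == i then F i else 0) = if (m <= j < n)%N then F j else 0.
Proof.
case: ifP => Hj.
  rewrite (bigD1_seq j) ?mem_index_iota ?iota_uniq //= eqxx big1 ?addr0 //.
  by move=> i; rewrite eq_sym => /negbTE ->.
rewrite big_seq big1 // => i; rewrite mem_index_iota => Hi.
by case: eqP => // E; move: Hj; rewrite E Hi.
Qed.

Lemma bilin_zquot_sum_l e p q (K : nat -> seq nat -> seq nat -> Qt) :
  (forall a X Y, (0 < a)%N -> (e <= a)%N -> posseq X -> posseq Y -> K a X Y = 0) ->
  bilin p q (fun X Y => if X is a :: X' then K a X' Y else 0)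
  = \sum_(1 <= a < e) bilin (zquot a p) q (K a).
Proof.
move=> K0.
transitivity (\sum_(1 <= a < e) \sum_(x <- p) x.1 *
  (if zdec x.2 is b :: r then (if b == a then
     \sum_(y <- q) y.1 * K a r (zdec y.2) else 0) else 0)); last first.
  apply: eq_big_nat => a /andP[a1 _].
  by rewrite /bilin (sum_zquot _ (fun X => \sum_(y <- q) y.1 * K a X (zdec y.2))).
rewrite exchange_big /=; apply: eq_bigr => x _.
rewrite -mulr_sumr; congr (_ * _).
case: (zdec x.2) (zdec_pos x.2) => [_|b r /andP[b0 pr]].
  by rewrite big1_eq; apply: big1 => y _; rewrite mulr0.
rewrite sum_nat_pred1; case: ifP => // Hb.
rewrite big1 // => y _; rewrite K0 ?mulr0 ?zdec_pos //.
by move: Hb; rewrite b0 /= => /negbT; rewrite -leqNgt.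
Qed.

Lemma bilin_zquot_sum_r e p q (K : nat -> seq nat -> seq nat -> Qt) :
  (forall b X Y, (0 < b)%N -> (e <= b)%N -> posseq X -> posseq Y -> K b X Y = 0) ->
  bilin p q (fun X Y => if Y is b :: Y' then K b X Y' else 0)
  = \sum_(1 <= b < e) bilin p (zquot b q) (K b).
Proof.
move=> K0; rewrite bilinC (@bilin_zquot_sum_l e q p (fun b Y X => K b X Y)).
  by apply: eq_bigr => b _; rewrite -bilinC.
by move=> b Y X *; apply: K0.
Qed.

Lemma coef_qprod_zk c d p q e ks : posseq ks -> (0 < e)%N ->
  coef (qprod c d p q) (zk e ++ zword ks) =
    coef (qprod c d (zquot e p) q) (zword ks)
  + coef (qprod c d p (zquot e q)) (zword ks)
  + (c * \sum_(1 <= a < e) \sum_(1 <= b < e)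
        (if (a + b == e)%N then coef (qprod c d (zquot a p) (zquot b q)) (zword ks) else 0)
   + d * \sum_(1 <= a < e) \sum_(1 <= b < e)
        (if (a + b < e)%N then
           coef (qprod c d (zquot a p) (zquot b q)) (zk (e - (a + b)) ++ zword ks)
         else 0)).
Proof.
move=> pk e0.
rewrite !coef_qprod (eq_bilin _ _ (fun X Y pX pY => coef_qsh_zk c d pX pY pk e0)).
rewrite !bilinD bilin_zquot_l // bilin_zquot_r //; congr (_ + _ + _).
set K := fun a b (A' B' : seq nat) =>
  (if (a + b == e)%N then c * coef (qsh c d A' B') (zword ks) else 0)
+ (if (a + b < e)%N then d * coef (qsh c d A' B') (zk (e - (a + b)) ++ zword ks) else 0).
have K0 a b X Y : (e < a + b)%N -> K a b X Y = 0.
  by move=> eab; rewrite /K (gtn_eqF eab) (leq_gtF (ltnW eab)) addr0.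
rewrite (@bilin_zquot_sum_l e p q (fun a X' Y => if Y is b :: B' then K a b X' B' else 0));
  last by move=> a X [|b Y] // a0 ea _ /andP[b0 _]; rewrite K0 //; lia.
rewrite !mulr_sumr -big_split /=; apply: eq_big_nat => a /andP[a1 _].
rewrite (@bilin_zquot_sum_r e (zquot a p) q (K a)); last by move=> b X Y *; rewrite K0 //; lia.
rewrite !mulr_sumr -big_split /=; apply: eq_bigr => b _.
by rewrite bilinD !bilin_if !coef_qprod; case: ifP; case: ifP; rewrite ?mulr0.
Qed.

(** * Products of geometric families *)

Lemma sum_shifted_conv (R : pzSemiRingType) n m1 m2 (G : nat -> nat -> R) :
  \sum_(0 <= i < n.+1)
     ((m1 <= i)%N%:R * (m2 <= n - i)%N%:R * G (i - m1)%N (n - i - m2)%N) =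
  (m1 + m2 <= n)%N%:R * \sum_(0 <= j < (n - (m1 + m2)).+1) G j (n - (m1 + m2) - j)%N.
Proof.
case: (leqP (m1 + m2) n) => H; last first.
  rewrite mul0r big_nat big1 // => i /andP[_ Hi].
  case: (leqP m1 i) => h1; case: (leqP m2 (n - i)) => h2; simp => //.
  by exfalso; lia.
simp; rewrite (@big_cat_nat _ _ _ m1) //=; last by lia.
rewrite big_nat big1 ?add0r; last by move=> i /andP[_ Hi]; rewrite leqNgt Hi; simp.
rewrite -{1}[m1]add0n big_addn (@big_cat_nat _ _ _ (n - (m1 + m2)).+1) //=; last by lia.
rewrite [X in _ + X = _](_ : _ = 0) ?addr0; last first.
  rewrite big_nat big1 // => i /andP[Hi Hi'].
  have -> : (m2 <= n - (i + m1))%N = false by lia.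
  by simp.
rewrite big_nat [RHS]big_nat; apply: eq_bigr => i /andP[_ Hi].
rewrite leq_addl (_ : (m2 <= n - (i + m1))%N); last by lia.
by simp; congr (G _ _); lia.
Qed.

Lemma sum_nat_multiples (V : nmodType) k m (g : nat -> V) : (0 < k)%N ->
  (forall a, ~~ (k %| a)%N -> g a = 0) ->
  \sum_(1 <= a < m * k) g a = \sum_(1 <= a < m) g (a * k)%N.
Proof.
move=> k0 g0; elim: m => [|m IH]; first by rewrite mul0n !big_geq.
case: m IH => [|m] IH.
  rewrite mul1n [RHS]big_geq // big_nat big1 // => a /andP[a1 ak].
  by apply: g0; apply/negP => /(dvdn_leq a1); rewrite leqNgt ak.
have lo : (1 <= m.+1 * k)%N by rewrite muln_gt0 k0.
have hi : (m.+1 * k <= m.+2 * k)%N by rewrite leq_mul2r leqnSn orbT.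
rewrite (big_cat_nat lo hi) IH [RHS]big_nat_recr //=; congr (_ + _).
rewrite big_ltn; last by rewrite ltn_mul2r k0 ltnSn.
rewrite big_nat big1 ?addr0 // => a /andP[a1 a2].
apply: g0; apply/negP => ka.
have kak : (k %| a - m.+1 * k)%N by rewrite dvdn_sub // dvdn_mull.
have ak_gt0 : (0 < a - m.+1 * k)%N by lia.
by have := dvdn_leq ak_gt0 kak; rewrite mulSnr in a2; lia.
Qed.

(* [A = 1/(1 - sum_m al m z_{mk} u^m)]: a word of [A i] is some [z_{mk}] with
   [m <= i] followed by a word of [A (i - m)]. *)
Definition geom_family (k : nat) (A : hts) (al : nat -> Qt) : Prop :=
  [/\ forall ks, zcoef (A 0%N) ks = (ks == [::])%:R,
      forall i, (0 < i)%N -> zcoef (A i) [::] = 0,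
      forall i m ks, (0 < m)%N ->
        zcoef (A i) ((m * k)%N :: ks) = (m <= i)%N%:R * al m * zcoef (A (i - m)%N) ks
    & forall i a ks, ~~ (k %| a)%N -> zcoef (A i) (a :: ks) = 0].

Lemma coef_ser_one_nil n : coef (ser_one n) [::] = (n == 0%N)%:R.
Proof. by rewrite /ser_one; case: (n == 0%N); rewrite ?coef_nil // (coef_hword [::]). Qed.

Lemma coef_ser_one_nonnil n w : w != [::] -> coef (ser_one n) w = 0.
Proof.
move=> w0; rewrite /ser_one; case: (n == 0%N); last exact: coef_nil.
by rewrite (coef_hword [::]) eq_sym (negbTE w0).
Qed.

Section GeomFamilyProduct.

Variables (c d : Qt) (k : nat) (A B : hts) (al be : nat -> Qt).
Hypotheses (k_gt0 : (0 < k)%N) (famA : geom_family k A al) (famB : geom_family k B be).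

Definition conv_coef n w := \sum_(0 <= i < n.+1) coef (qprod c d (A i) (B (n - i)%N)) w.

Lemma coef_ser_prod n w : coef (ser_prod (qprod c d) A B n) w = conv_coef n w.
Proof. by rewrite /ser_prod coef_flatten big_map /conv_coef /index_iota subn0. Qed.

Lemma coef_qprod_zquot_l m i q w : (0 < m)%N ->
  coef (qprod c d (zquot (m * k) (A i)) q) w =
  (m <= i)%N%:R * al m * coef (qprod c d (A (i - m)%N) q) w.
Proof.
case: famA => _ _ Am _ m0; rewrite !coef_qprod; apply: bilin_zcoef_l => ks.
by rewrite zcoef_zquot ?muln_gt0 ?m0 // Am.
Qed.

Lemma coef_qprod_zquot_l_ndvd a i q w : (0 < a)%N -> ~~ (k %| a)%N ->
  coef (qprod c d (zquot a (A i)) q) w = 0.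
Proof.
case: famA => _ _ _ Andvd a0 ka; rewrite !coef_qprod.
rewrite (@bilin_zcoef_l _ [::] 0) ?mul0r // => ks.
by rewrite zcoef_zquot // Andvd // mul0r.
Qed.

Lemma coef_qprod_zquot_r m j p w : (0 < m)%N ->
  coef (qprod c d p (zquot (m * k) (B j))) w =
  (m <= j)%N%:R * be m * coef (qprod c d p (B (j - m)%N)) w.
Proof.
case: famB => _ _ Bm _ m0; rewrite !coef_qprod; apply: bilin_zcoef_r => ks.
by rewrite zcoef_zquot ?muln_gt0 ?m0 // Bm.
Qed.

Lemma coef_qprod_zquot_r_ndvd b j p w : (0 < b)%N -> ~~ (k %| b)%N ->
  coef (qprod c d p (zquot b (B j))) w = 0.
Proof.
case: famB => _ _ _ Bndvd b0 kb; rewrite !coef_qprod.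
rewrite (@bilin_zcoef_r _ _ [::] 0) ?mul0r // => ks.
by rewrite zcoef_zquot // Bndvd // mul0r.
Qed.

Lemma conv_zquot_l m n w : (0 < m)%N ->
  \sum_(0 <= i < n.+1) coef (qprod c d (zquot (m * k) (A i)) (B (n - i)%N)) w =
  al m * ((m <= n)%N%:R * conv_coef (n - m)%N w).
Proof.
move=> m0; have := sum_shifted_conv n m 0 (fun i j => coef (qprod c d (A i) (B j)) w).
rewrite addn0 => <-; rewrite mulr_sumr; apply: eq_bigr => i _.
by rewrite coef_qprod_zquot_l // subn0; simp; ring.
Qed.

Lemma conv_zquot_r m n w : (0 < m)%N ->
  \sum_(0 <= i < n.+1) coef (qprod c d (A i) (zquot (m * k) (B (n - i)%N))) w =
  be m * ((m <= n)%N%:R * conv_coef (n - m)%N w).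
Proof.
move=> m0; have := sum_shifted_conv n 0 m (fun i j => coef (qprod c d (A i) (B j)) w).
rewrite add0n => <-; rewrite mulr_sumr; apply: eq_bigr => i _.
by rewrite coef_qprod_zquot_r // subn0; simp; ring.
Qed.

Definition conv_pair n w a b :=
  if (k %| a)%N && (k %| b)%N then
    al (a %/ k) * be (b %/ k) *
      ((a %/ k + b %/ k <= n)%N%:R * conv_coef (n - (a %/ k + b %/ k))%N w)
  else 0.

Lemma conv_zquot2 a b n w : (0 < a)%N -> (0 < b)%N ->
  \sum_(0 <= i < n.+1) coef (qprod c d (zquot a (A i)) (zquot b (B (n - i)%N))) w =
  conv_pair n w a b.
Proof.
move=> a0 b0; rewrite /conv_pair.
have [ka|ka] /= := boolP (k %| a)%N; last first.
  by rewrite big1 // => i _; rewrite coef_qprod_zquot_l_ndvd.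
have [kb|kb] /= := boolP (k %| b)%N; last first.
  by rewrite big1 // => i _; rewrite coef_qprod_zquot_r_ndvd.
move: a0 b0; rewrite -(divnK ka) -(divnK kb) !muln_gt0 !mulnK // => /andP[a'0 _] /andP[b'0 _].
have := sum_shifted_conv n (a %/ k) (b %/ k) (fun i j => coef (qprod c d (A i) (B j)) w).
move=> <-; rewrite mulr_sumr; apply: eq_bigr => i _.
by rewrite coef_qprod_zquot_l // coef_qprod_zquot_r //; ring.
Qed.

Lemma sum_conv_zquot2 n e (P : nat -> nat -> bool) (w : nat -> nat -> word) :
  \sum_(0 <= i < n.+1) \sum_(1 <= a < e) \sum_(1 <= b < e)
    (if P a b then coef (qprod c d (zquot a (A i)) (zquot b (B (n - i)%N))) (w a b) else 0)
  = \sum_(1 <= a < e) \sum_(1 <= b < e) (if P a b then conv_pair n (w a b) a b else 0).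
Proof.
rewrite exchange_big; apply: eq_big_nat => a /andP[a0 _].
rewrite exchange_big; apply: eq_big_nat => b /andP[b0 _].
by case: (P a b); [rewrite conv_zquot2 | rewrite big1].
Qed.

Lemma coef_qprod_nil p q : coef (qprod c d p q) [::] = zcoef p [::] * zcoef q [::].
Proof.
rewrite coef_qprod /bilin /zcoef mulr_suml; apply: eq_bigr => x _.
rewrite mulr_sumr; under eq_bigr => y _ do rewrite coef_qsh_nil ?zdec_pos //.
case: eqP => _ /=; last by rewrite mul0r; apply: big1 => y _; simp.
by rewrite mulr_sumr; apply: eq_bigr => y _; case: eqP; simp.
Qed.

Lemma conv_coef_nil n : conv_coef n [::] = (n == 0%N)%:R.
Proof.
case: famA => A0 Ai _ _; case: famB => B0 Bj _ _.
rewrite /conv_coef; under eq_bigr do rewrite coef_qprod_nil.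
case: n => [|n]; first by rewrite big_nat1 A0 B0; simp.
rewrite big_nat big1 // => -[|i] /andP[_ Hi]; first by rewrite Bj ?mulr0.
by rewrite Ai ?mul0r.
Qed.

Lemma conv_coef_not_h1 n w : ~~ last ly w -> conv_coef n w = 0.
Proof.
move=> hw; rewrite /conv_coef big1 // => i _; rewrite coef_qprod /bilin big1 // => x _.
by rewrite big1 ?mulr0 // => y _; rewrite qsh_in_h1 ?zdec_pos ?mulr0.
Qed.

Lemma conv_pair_eq0 n w a b : (0 < a)%N -> w != [::] ->
  (forall n' w, (n' < n)%N -> w != [::] -> conv_coef n' w = 0) ->
  conv_pair n w a b = 0.
Proof.
move=> a0 w0 IH; rewrite /conv_pair; case: ifP => // /andP[ka _].
have a'0 : (0 < a %/ k)%N by rewrite divn_gt0 // dvdn_leq.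
case: leqP => H; last by simp.
rewrite IH ?mulr0 //; move: a'0 H; set x := (a %/ k)%N; set y := (b %/ k)%N; lia.
Qed.

Lemma conv_coef_zk n e ks : posseq ks -> (0 < e)%N ->
  (forall n' w, (n' < n)%N -> w != [::] -> conv_coef n' w = 0) ->
  conv_coef n (zk e ++ zword ks) =
    (if (k %| e)%N then
      (al (e %/ k) + be (e %/ k) + c * \sum_(1 <= a < e %/ k) \sum_(1 <= b < e %/ k)
        (if (a + b == e %/ k)%N then al a * be b else 0))
      * ((e %/ k <= n)%N%:R * conv_coef (n - e %/ k)%N (zword ks))
     else 0).
Proof.
move=> pk e0 IH; rewrite {1}/conv_coef; under eq_bigr do rewrite coef_qprod_zk //.
rewrite !big_split /= -!mulr_sumr !sum_conv_zquot2.
(* The [x^{a+b}]-terms are coefficients of lower-degree products at nonempty words. *)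
rewrite [X in d * X](_ : _ = 0) ?mulr0 ?addr0; last first.
  rewrite big_nat big1 // => a /andP[a0 _]; rewrite big_nat big1 // => b _.
  case: ifP => // _.
  by rewrite conv_pair_eq0 // -zword_cons zword_eq_nil.
have [ke|ke] := boolP (k %| e)%N; last first.
  rewrite big_nat big1 => [|i _]; last exact: coef_qprod_zquot_l_ndvd.
  rewrite big_nat big1 => [|i _]; last exact: coef_qprod_zquot_r_ndvd.
  rewrite big_nat big1 ?mulr0 ?addr0 // => a /andP[a0 _].
  rewrite big_nat big1 // => b _; rewrite /conv_pair.
  case: eqP => // Hab; case: ifP => // /andP[ka kb].
  by move: ke; rewrite -Hab dvdn_add.
set m := (e %/ k)%N.
have Ee : e = (m * k)%N by rewrite divnK.
have m0 : (0 < m)%N by rewrite divn_gt0 // dvdn_leq.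
rewrite Ee conv_zquot_l // conv_zquot_r // (@sum_nat_multiples _ k m) //; last first.
  by move=> a ka; rewrite big1 // => b _; rewrite /conv_pair (negbTE ka) /=; case: ifP.
rewrite (eq_big_nat _ _ (F2 := fun a => \sum_(1 <= b < m)
    (if (a + b == m)%N then al a * be b else 0) *
    ((m <= n)%N%:R * conv_coef (n - m)%N (zword ks)))); last first.
  move=> a _; rewrite (@sum_nat_multiples _ k m) //; last first.
    by move=> b kb; rewrite /conv_pair (negbTE kb) andbF; case: ifP.
  apply: eq_bigr => b _.
  rewrite -mulnDl eqn_pmul2r //; case: ifP => [/eqP Hab|]; last by simp.
  by rewrite /conv_pair !dvdn_mull //= !mulnK // Hab.
by under eq_bigr do rewrite -mulr_suml; rewrite -mulr_suml; ring.
Qed.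

Hypothesis weights_inverse : forall m, (0 < m)%N ->
  al m + be m + c * \sum_(1 <= a < m) \sum_(1 <= b < m)
      (if (a + b == m)%N then al a * be b else 0) = 0.

Theorem ser_prod_geom_family : ser_eq (ser_prod (qprod c d) A B) ser_one.
Proof.
move=> n w; rewrite coef_ser_prod.
elim/ltn_ind: n w => n IH w.
have [hw|hw] := boolP (last ly w); last first.
  by rewrite conv_coef_not_h1 // coef_ser_one_nonnil //; apply: contraNneq hw => ->.
rewrite -(zword_zdec hw); case: (zdec w) (zdec_pos w) => [_|e ks /andP[e0 pk]].
  by rewrite conv_coef_nil coef_ser_one_nil.
rewrite coef_ser_one_nonnil ?zword_eq_nil // conv_coef_zk //; last first.
  by move=> n' w' lt_n'n w'0; rewrite IH // coef_ser_one_nonnil.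
by case: ifP => // ke; rewrite weights_inverse ?mul0r // divn_gt0 // dvdn_leq.
Qed.

End GeomFamilyProduct.

(** * The regularization [S_s] of a geometric series *)

Lemma hmul_hone_l p : hmul hone p = p.
Proof. by rewrite /hmul /= cats0; elim: p => //= -[x w] p ->; rewrite mul1r. Qed.

Lemma hmul_cat p1 p2 q : hmul (p1 ++ p2) q = hmul p1 q ++ hmul p2 q.
Proof. exact: allpairs_cat. Qed.

Lemma hmulA p q r : hmul (hmul p q) r = hmul p (hmul q r).
Proof.
elim: p => [|a p IH] //; rewrite -cat1s !hmul_cat IH; congr (_ ++ _).
rewrite /hmul /= !cats0 allpairs_mapl map_allpairs; apply: eq_allpairs => b c /=.
by rewrite mulrA catA.
Qed.

Lemma sigma_word_cat s u v :
  sigma_word s (u ++ v) = hmul (sigma_word s u) (sigma_word s v).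
Proof. by elim: u => [|a u IH] /=; rewrite ?hmul_hone_l // IH hmulA. Qed.

Lemma S_word_cat s u w : w != [::] ->
  S_word s (u ++ w) = hmul (sigma_word s u) (S_word s w).
Proof.
case/lastP: w => [|w a] // _.
by rewrite -rcons_cat /S_word !rev_rcons !revK sigma_word_cat hmulA.
Qed.

Lemma sigma_word_xs s m : sigma_word s (nseq m lx) = [:: (1, nseq m lx)].
Proof. by elim: m => //= m ->; rewrite /hmul /= mulr1. Qed.

Lemma zcoef_cat p q ks : zcoef (p ++ q) ks = zcoef p ks + zcoef q ks.
Proof. by rewrite /zcoef big_cat. Qed.

Lemma zcoef_hone ks : zcoef hone ks = (ks == [::])%:R.
Proof. by rewrite /zcoef big_seq1 eq_sym; case: eqP. Qed.

Lemma zcoef_hmul_xs l m p c ks :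
  zcoef (hmul [:: (l, nseq m lx)] p) (c :: ks) =
  l * (if (m < c)%N then zcoef p ((c - m)%N :: ks) else 0).
Proof.
rewrite /hmul /= cats0 /zcoef big_map; case: ltnP => hm; last first.
  rewrite mulr0 big1 // => b _ /=; rewrite zdec_xs zdec_aux_shift.
  case: (zdec b.2) (zdec_pos b.2) => [|e r] //= /andP[e0 _].
  by rewrite eqseq_cons (_ : (m + e == c)%N = false) //; lia.
rewrite mulr_sumr; apply: eq_bigr => b _ /=; rewrite zdec_xs zdec_aux_shift.
case: (zdec b.2) (zdec_pos b.2) => [|e r] /=; first by simp.
case/andP => e0 _; rewrite !eqseq_cons (_ : (m + e == c)%N = (e == c - m)%N); last by lia.
by case: ifP; simp.
Qed.

Lemma zcoef_hmul_xs_nil l m p :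
  zcoef (hmul [:: (l, nseq m lx)] p) [::] = l * zcoef p [::].
Proof.
rewrite /hmul /= cats0 /zcoef big_map mulr_sumr; apply: eq_bigr => b _ /=.
by rewrite zdec_xs zdec_aux_shift; case: (zdec b.2) => [|e r] /=; simp.
Qed.

Lemma zcoef_hmul_zk l a p ks : (0 < a)%N ->
  zcoef (hmul [:: (l, zk a)] p) ks =
  l * (if ks is c :: ks' then (if a == c then zcoef p ks' else 0) else 0).
Proof.
move=> a0; rewrite /hmul /= cats0 /zcoef big_map.
case: ks => [|c ks]; first by rewrite mulr0 big1 // => b _; rewrite zdec_zk.
case: eqP => [<-|ac]; last by rewrite mulr0 big1 // => b _; rewrite zdec_zk // eqseq_cons; case: eqP.
rewrite mulr_sumr; apply: eq_bigr => b _ /=.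
by rewrite zdec_zk // eqseq_cons eqxx /=; case: ifP; simp.
Qed.

Section RegularizedPowers.

Variables (s : Qt) (k : nat).
Hypothesis k_gt0 : (0 < k)%N.

Definition S_zk_pow i := S_word s (wpow (zk k) i).

Lemma S_zk_pow0 : S_zk_pow 0 = hone.
Proof. by []. Qed.

Lemma S_zk_pow1 : S_zk_pow 1 = [:: (1, zk k)].
Proof.
rewrite /S_zk_pow /wpow /= cats0 /S_word /zk rev_rcons revK sigma_word_xs.
by rewrite /hmul /= mulr1 cats1.
Qed.

Lemma S_zk_powSS i : S_zk_pow i.+2 =
  hmul [:: (s, nseq k lx)] (S_zk_pow i.+1) ++ hmul [:: (1, zk k)] (S_zk_pow i.+1).
Proof.
rewrite /S_zk_pow (_ : wpow (zk k) i.+2 = zk k ++ wpow (zk k) i.+1) //.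
rewrite S_word_cat ?cat_eq_nil ?zk_eq_nil // -hmul_cat.
rewrite /zk -cats1 sigma_word_cat sigma_word_xs /= /hmul /= !mulr1 !mul1r.
by rewrite -nseqS_cat cats0 prednK.
Qed.

Lemma zcoef_S_zk_pow_nil i : (0 < i)%N -> zcoef (S_zk_pow i) [::] = 0.
Proof.
case: i => // i _; elim: i => [|i IH].
  by rewrite S_zk_pow1 /zcoef big_seq1 zdec_zk1.
by rewrite S_zk_powSS zcoef_cat zcoef_hmul_xs_nil zcoef_hmul_zk // IH; simp.
Qed.

Lemma zcoef_S_zk_pow_cons i c ks : zcoef (S_zk_pow i.+1) (c :: ks) =
  s * (if (k < c)%N then zcoef (S_zk_pow i) ((c - k)%N :: ks) else 0)
  + (if k == c then zcoef (S_zk_pow i) ks else 0).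
Proof.
(* At [i = 0] the missing [s x^k]-part of [S_s(z_k)] would only meet the empty
   index sequence of [S_s(1) = 1]. *)
case: i => [|i]; last by rewrite S_zk_powSS zcoef_cat zcoef_hmul_xs zcoef_hmul_zk // mul1r.
rewrite S_zk_pow1 S_zk_pow0 !zcoef_hone /zcoef big_seq1 zdec_zk1 //.
by rewrite eqseq_cons (eq_sym [::]); case: (k < c)%N; case: (k == c); case: (ks == [::]); simp.
Qed.

Lemma zcoef_S_zk_pow_mul i m ks : (0 < m)%N ->
  zcoef (S_zk_pow i) ((m * k)%N :: ks) =
  (m <= i)%N%:R * s ^+ m.-1 * zcoef (S_zk_pow (i - m)%N) ks.
Proof.
elim: i m ks => [|i IH] m ks m0.
  by rewrite S_zk_pow0 zcoef_hone leqn0 (gtn_eqF m0); simp.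
rewrite zcoef_S_zk_pow_cons; case: m m0 => [|[|m]] // _.
  by rewrite mul1n ltnn eqxx subSS subn0 expr0; simp.
have ltk : (k < m.+2 * k)%N by rewrite mulSn -addn1 leq_add2l muln_gt0 k_gt0.
rewrite ltk (ltn_eqF ltk) mulSn addKn IH // !subSS ltnS exprS; simp.
by rewrite !mulrA [s * _]mulrC.
Qed.

Lemma zcoef_S_zk_pow_ndvd i a ks : ~~ (k %| a)%N -> zcoef (S_zk_pow i) (a :: ks) = 0.
Proof.
elim: i a ks => [|i IH] a ks ka; first by rewrite S_zk_pow0 zcoef_hone.
rewrite zcoef_S_zk_pow_cons (_ : (k == a) = false); last by apply: contraNF ka => /eqP <-.
case: ltnP => ltka; last by simp.
rewrite IH ?mulr0 ?addr0 //; apply: contra ka => kak.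
by rewrite -(subnK (ltnW ltka)) dvdn_add.
Qed.

Lemma zcoef_S_ser_geom e i ks :
  zcoef (S_ser s (geom e (zk k)) i) ks = e ^+ i * zcoef (S_zk_pow i) ks.
Proof.
rewrite /S_ser /geom /S_map /= cats0 /zcoef /hscale big_map mulr_sumr.
by apply: eq_bigr => b _ /=; case: ifP; simp.
Qed.

End RegularizedPowers.

Lemma geom_family_S_ser s k e : (0 < k)%N ->
  geom_family k (S_ser s (geom e (zk k))) (fun m => e ^+ m * s ^+ m.-1).
Proof.
move=> k0; split=> [ks|i i0|i m ks m0|i a ks ka]; rewrite !zcoef_S_ser_geom.
- by rewrite S_zk_pow0 zcoef_hone mul1r.
- by rewrite zcoef_S_zk_pow_nil // mulr0.
- rewrite zcoef_S_zk_pow_mul //; case: leqP => mi; last by simp.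
  by rewrite -{1}(subnKC mi) exprD; simp; ring.
- by rewrite zcoef_S_zk_pow_ndvd // mulr0.
Qed.

Lemma zcoef_S0_zk_pow k i ks : (0 < k)%N ->
  zcoef (S_zk_pow 0 k i) ks = (nseq i k == ks)%:R.
Proof.
move=> k0; elim: ks i => [|c ks IH] [|i].
- by rewrite S_zk_pow0 zcoef_hone.
- by rewrite zcoef_S_zk_pow_nil.
- by rewrite S_zk_pow0 zcoef_hone.
by rewrite zcoef_S_zk_pow_cons // mul0r add0r IH /= eqseq_cons; case: (k == c); simp.
Qed.

Lemma geom_family_zcoef k A A' al : (forall i ks, zcoef (A i) ks = zcoef (A' i) ks) ->
  geom_family k A al -> geom_family k A' al.
Proof. by move=> AA' [A0 Ai Am Ad]; split=> *; rewrite -!AA' ?A0 ?Ai ?Am ?Ad. Qed.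

Lemma geom_family_geom k e : (0 < k)%N ->
  geom_family k (geom e (zk k)) (fun m => e ^+ m * 0 ^+ m.-1).
Proof.
move=> k0; apply: geom_family_zcoef (geom_family_S_ser 0 e k0) => i ks.
rewrite zcoef_S_ser_geom zcoef_S0_zk_pow // /geom /zcoef big_seq1 /=.
suff -> : zdec (wpow (zk k) i) = nseq i k by case: eqP; simp.
by elim: i => // i IH; rewrite /wpow /= zdec_zk // -/(wpow _ _) IH.
Qed.

(** * The two weight identities *)

Lemma sum_antidiagonal (V : nmodType) (f : nat -> nat -> V) m :
  \sum_(1 <= a < m) \sum_(1 <= b < m) (if (a + b == m)%N then f a b else 0) =
  \sum_(1 <= a < m) f a (m - a)%N.
Proof.
apply: eq_big_nat => a /andP[a1 am].
have ma : (m - a)%N \in index_iota 1 m by rewrite mem_index_iota; lia.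
rewrite (bigD1_seq _ ma (iota_uniq _ _)) /=.
rewrite (subnKC (ltnW am)) eqxx big1 ?addr0 // => b /negbTE bma.
by case: eqP => // ab; move: bma; rewrite (_ : b = m - a)%N ?eqxx //; lia.
Qed.

Lemma subrX_conv (R : comPzRingType) (x y : R) n :
  x ^+ n - y ^+ n = (x - y) * \sum_(1 <= a < n.+1) x ^+ a.-1 * y ^+ (n - a).
Proof.
rewrite subrXX; congr (_ * _).
rewrite big_add1 /= big_mkord (reindex_inj rev_ord_inj) /=.
apply: eq_bigr => i _; congr (_ ^+ _ * _); have := ltn_ord i; lia.
Qed.

Lemma geom_weights_inverse (R : comPzRingType) (x y c : R) (al be : nat -> R) :
  c = x - y -> (forall m, (0 < m)%N -> al m = x ^+ m.-1) ->
  (forall m, (0 < m)%N -> be m = - y ^+ m.-1) ->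
  forall m, (0 < m)%N -> al m + be m + c * \sum_(1 <= a < m) \sum_(1 <= b < m)
      (if (a + b == m)%N then al a * be b else 0) = 0.
Proof.
move=> -> al_pow be_pow [|n] // _; rewrite sum_antidiagonal al_pow // be_pow //=.
rewrite (eq_big_nat _ _ (F2 := fun a => - (x ^+ a.-1 * y ^+ (n - a)))); last first.
  move=> a /andP[a1 an]; rewrite al_pow // be_pow ?subn_gt0 // mulrN.
  by congr (- (_ * _ ^+ _)); lia.
by rewrite sumrN mulrN -subrX_conv subrr.
Qed.

Lemma signed_pow (R : pzRingType) (x : R) m : (0 < m)%N ->
  (-1) ^+ m * x ^+ m.-1 = - (- x) ^+ m.-1.
Proof.
by case: m => // m _ /=; rewrite exprS mulN1r mulNr (exprNn x).
Qed.

Theorem corollary4p7 (k : nat) : (0 < k)%N ->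
  ser_eq (ser_prod harm (S_ser 'X (geom 1 (zk k)))
                        (S_ser (1 - 'X) (geom (-1) (zk k))))
         ser_one
  /\
  ser_eq (ser_prod tharm (S_ser (1 - 2%:R * 'X) (geom 1 (zk k)))
                         (geom (-1) (zk k)))
         ser_one.
Proof.
move=> k0; split.
- apply: (ser_prod_geom_family _ k0 (geom_family_S_ser _ _ k0) (geom_family_S_ser _ _ k0)).
  apply: (@geom_weights_inverse _ 'X ('X - 1)) => [|m _|m m0]; first by rewrite opprB addrC subrK.
  + by rewrite expr1n mul1r.
  + by rewrite signed_pow // opprB.
- apply: (ser_prod_geom_family _ k0 (geom_family_S_ser _ _ k0) (geom_family_geom _ k0)).
  apply: (@geom_weights_inverse _ _ 0) => [|m _|m m0]; first by rewrite subr0.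
  + by rewrite expr1n mul1r.
  + by rewrite signed_pow // oppr0.
Qed.
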